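(* Let $V=\mathbb{C}^2$ and consider the Segre cone $X_3\subset V^{\otimes3}$ of rank one tensors. (1) Let $\mu=(2,1)$ and let $t\in S^{(2,1)}V\subset V^{\otimes3}$ be general. Then $t$ admits four critical binary tensors of rank one on $X_{(2,1)}$. The remaining two critical binary tensors of rank one for $t$ on $X_3$ are $x\otimes y\otimes z$ and $y\otimes x\otimes z$ for some $x,y,z\in V$. If $t$ is real, the common singular value of these two critical points on $X_3\setminus X_{(2,1)}$ is real. (2) Let $\mu=(3)$ and let $t\in S^3V\subset V^{\otimes3}$ be general. Then $t$ admits three critical binary tensors of rank one on $X_{(3)}$. The remaining three critical binary tensors of rank one for $t$ on $X_3$ are $x\otimes x\otimes y$, $x\otimes y\otimes x$ and $y\otimes x\otimes x$ for some $x,y\in V$. If $t$ is real, the common singular value of these three critical points on $X_3\setminus X_{(3)}$ is real.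
   Context: $V=\mathbb{C}^2$ carries the complex bilinear symmetric form $q(x,y)=x_0y_0+x_1y_1$, $q(x)=q(x,x)$, and $V^{\otimes3}$ the induced form $\widetilde q(v_1\otimes v_2\otimes v_3,w_1\otimes w_2\otimes w_3)=\prod q(v_i,w_i)$; real tensors are those with real coordinates. $S^{(2,1)}V=S^2V\otimes V$ is the subspace of $V^{\otimes3}$ of tensors symmetric in the first two factors, $S^3V$ the fully symmetric tensors; $X_{(2,1)}=\{x^2\otimes y\}$ and $X_{(3)}=\{x^3\}$ are the corresponding cones of partially symmetric / symmetric rank one tensors, contained in $X_3=\{x\otimes y\otimes z\}$. A critical binary tensor of rank one for $t$ on a cone $X$ is a nonzero smooth point $z\in X$ with $\widetilde q(t-z,y)=0$ for all $y\in T_zX$. Non-isotropic critical tensors for $t$ on $X_3$ are of the form $\sigma\,x_1\otimes x_2\otimes x_3$ with $q(x_i)=1$ and $\widetilde q(t,\ldots\otimes v\otimes\ldots)=\sigma q(x_i,v)$ (contracting $t$ with the $x_k$, $k\neq i$, and $v$ in slot $i$) for all $i$ and $v\in V$; $\sigma$ is the corresponding singular value. *)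

From HB Require Import structures.
From mathcomp Require Import all_boot all_order all_algebra.
From mathcomp Require Import complex.
From mathcomp Require Import reals.
From mathcomp Require mpoly.
Set Implicit Arguments. Unset Strict Implicit. Unset Printing Implicit Defensive.
Import Order.TTheory GRing.Theory Num.Theory.
Local Open Scope ring_scope.

Section Tensors.
Variable R : realType.
Local Notation C := (R[i]).

Definition vec := 'I_2 -> C.
(* tensors of V^{(x)3}, coordinates w.r.t. e_i (x) e_j (x) e_k, indexed by ((i,j),k) *)
Definition tensor := {ffun 'I_2 * 'I_2 * 'I_2 -> C}.

Definition q (x y : vec) : C := \sum_(i < 2) x i * y i.

(* the induced form q~ on V^{(x)3}: q~(v1(x)v2(x)v3, w1(x)w2(x)w3) = prod q(vi,wi),
   i.e. the standard coordinatewise bilinear form *)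
Definition qt (t s : tensor) : C := \sum_(p : 'I_2 * 'I_2 * 'I_2) t p * s p.

Definition tprod (x y z : vec) : tensor := [ffun p => x p.1.1 * y p.1.2 * z p.2].

Definition tscale (c : C) (t : tensor) : tensor := [ffun p => c * t p].

Definition X3 (z : tensor) : Prop := exists x y w, z = tprod x y w.
Definition T3 (z u : tensor) : Prop :=
  exists x y w, z = tprod x y w /\
    exists a b c, u = tprod a y w + tprod x b w + tprod x y c.

Definition X21 (z : tensor) : Prop := exists x y, z = tprod x x y.
Definition T21 (z u : tensor) : Prop :=
  exists x y, z = tprod x x y /\
    exists a b, u = tprod a x y + tprod x a y + tprod x x b.

Definition Xsym3 (z : tensor) : Prop := exists x, z = tprod x x x.
Definition Tsym3 (z u : tensor) : Prop :=
  exists x, z = tprod x x x /\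
    exists a, u = tprod a x x + tprod x a x + tprod x x a.

(* critical (binary) tensor of rank one for t on the cone X with tangent spaces T:
   a nonzero point z of X (all nonzero points of these cones are smooth) with
   q~(t - z, y) = 0 for all y in T_z X *)
Definition critical (X : tensor -> Prop) (T : tensor -> tensor -> Prop)
  (t z : tensor) : Prop :=
  z != 0 /\ X z /\ forall u, T z u -> qt (t - z) u = 0.

Definition singular_value (t z : tensor) (sigma : C) : Prop :=
  exists x1 x2 x3 : vec,
    [/\ q x1 x1 = 1, q x2 x2 = 1, q x3 x3 = 1,
        z = tscale sigma (tprod x1 x2 x3) &
        forall v : vec,
          [/\ qt t (tprod v x2 x3) = sigma * q x1 v,
              qt t (tprod x1 v x3) = sigma * q x2 v &
              qt t (tprod x1 x2 v) = sigma * q x3 v]].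

Definition S21 (t : tensor) : Prop := forall i j k, t (i, j, k) = t (j, i, k).
Definition S3 (t : tensor) : Prop :=
  forall i j k, t (i, j, k) = t (j, i, k) /\ t (i, j, k) = t (i, k, j).

Definition real_tensor (t : tensor) : Prop := forall p, t p \is Num.real.

(* coordinates of a tensor as a point of C^8: index 4i+2j+k *)
Definition coords (t : tensor) : 'I_8 -> C :=
  fun n => t (inord (n %/ 4), inord ((n %/ 2) %% 2), inord (n %% 2)).

(* "a general t in the subspace S satisfies P": P holds on a nonempty Zariski
   open subset of S, namely where some polynomial not vanishing identically on S
   does not vanish *)
Definition general_in (S : tensor -> Prop) (P : tensor -> Prop) : Prop :=
  exists f : mpoly.mpoly 8 C,
    (exists t0, S t0 /\ mpoly.meval (coords t0) f != 0) /\
    forall t, S t -> mpoly.meval (coords t) f != 0 -> P t.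

End Tensors.

(* A nonzero x (x) y (x) w is critical for t on X_3 exactly when the singular vector
   equations t(., y, w) = q(y) q(w) x, t(x, ., w) = q(x) q(w) y, t(x, y, .) = q(x) q(y) w hold.
   On X_(2,1) and X_(3) the tangent directions only see twice, resp. three times, the first of
   them, so the critical points there are the critical points on X_3 lying on the smaller cone.

   Let t be symmetric in its first two slots, L = t(e_i, e_i, .) its partial trace, and
   M = t(., ., L^perp), a traceless symmetric matrix with M^2 = s Id.  If y // x, the point
   is x (x) x (x) t(x, x, .) / q(x)^2 with x a zero of the binary quartic
   P(x) = t(x^perp, x, t(x, x, .)), which generically has four simple non-isotropic zeros.
   If x, y are independent, the equations force q(L, w) = 0, hence w // L^perp, y // M x,
   and x is a zero of the binary quadratic Q(x) = t(x, M x, L).  As Q(M x) = s Q(x), the two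
   zeros of Q are x and M x: this gives exactly x (x) M x (x) w and M x (x) x (x) w, with
   singular value sqrt(s) / sqrt(q(L)), real for real t since s and q(L) are then sums of
   squares.

   For t fully symmetric, P(x) = t(x, x, x^perp) q(L, x).  The zeros of the cubic factor give the
   symmetric critical points; the zero x // L^perp gives x (x) x (x) y with y not parallel to x,
   whose two slot permutations are therefore the two critical points off X_(2,1).

   All non-degeneracy conditions used (leading coefficients, s, q(L) and resultants excluding
   multiple, isotropic or degenerate zeros) make up one polynomial in the entries of t, which
   does not vanish at an explicit symmetric tensor. *)

From mathcomp Require Import all_boot all_order all_algebra.
From mathcomp Require Import complex reals.
From mathcomp Require Import separable ring mpoly.
From Stdlib Require Import FunctionalExtensionality.
Set Implicit Arguments. Unset Strict Implicit. Unset Printing Implicit Defensive.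
Import Order.TTheory GRing.Theory Num.Theory.
Local Open Scope ring_scope.

Definition i0 : 'I_2 := ord0.
Definition i1 : 'I_2 := ord_max.

Lemma ord2P (i : 'I_2) : i = i0 \/ i = i1.
Proof. by case: i => [[|[|n]] Hi] //; [left | right]; apply: val_inj. Qed.

Lemma big_ord2 (M : nmodType) (F : 'I_2 -> M) : \sum_(i < 2) F i = F i0 + F i1.
Proof. by rewrite big_ord_recl big_ord1; congr (_ + F _); apply: val_inj. Qed.

Section Polynomials.
Variable A : nzRingType.

Definition pI : {poly A} := 1 + 'X^2.

Lemma size_sum_le (I : finType) (F : I -> {poly A}) n :
  (forall i, size (F i) <= n)%N -> (size (\sum_i F i)%R <= n)%N.
Proof.
move=> hF; elim/big_ind: _ => // [|p q hp hq]; first by rewrite size_poly0.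
by rewrite (leq_trans (size_polyD _ _)) // geq_max hp hq.
Qed.

Lemma size_scale_Xn_le (c : A) m n : (m <= n)%N -> (size (c *: 'X^m) <= n.+1)%N.
Proof. by move=> hmn; rewrite (leq_trans (size_scale_leq _ _)) // size_polyXn. Qed.

Lemma size_pI_le : (size pI <= 3)%N.
Proof. by rewrite (leq_trans (size_polyD _ _)) // geq_max size_poly1 size_polyXn. Qed.

Lemma coef_pI2 : pI`_2 = 1.
Proof. by rewrite coefD coefC coefXn add0r. Qed.

Lemma size_deriv_le (p : {poly A}) n : (size p <= n.+1)%N -> (size p^`() <= n)%N.
Proof. by move=> sp; apply/leq_sizeP => j hj; rewrite coef_deriv (leq_sizeP _ _ sp) ?mul0rn. Qed.

End Polynomials.
Arguments pI {A}.

Lemma rmorph_resultant (aR rR : nzRingType) (f : {rmorphism aR -> rR}) (p q : {poly aR}) :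
    f (lead_coef p) != 0 -> f (lead_coef q) != 0 ->
  f (resultant p q) = resultant (map_poly f p) (map_poly f q).
Proof.
move=> fp fq; rewrite /resultant /Sylvester_mx !size_map_poly_id0 //.
rewrite -det_map_mx /= map_col_mx; congr (\det (col_mx _ _));
  by apply: map_lin1_mx => v; rewrite map_poly_rV rmorphM /= map_rVpoly.
Qed.

Lemma lead_coef_top (A : nzRingType) (p : {poly A}) n :
  (size p <= n.+1)%N -> p`_n != 0 -> lead_coef p = p`_n /\ size p = n.+1.
Proof.
move=> sp pn; suff e : size p = n.+1 by rewrite lead_coefE e.
by apply/eqP; rewrite eqn_leq sp; apply: contraNT pn; rewrite -leqNgt => /leq_sizeP->.
Qed.

Lemma size_pI (A : nzRingType) : size (pI : {poly A}) = 3.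
Proof.
have I2 : (pI : {poly A})`_2 != 0 by rewrite coef_pI2 oner_eq0.
by have [_ ->] := lead_coef_top (@size_pI_le A) I2.
Qed.

Lemma lead_coef_rmorph_neq0 (A B : nzRingType) (f : {rmorphism A -> B}) (p : {poly A}) n :
  (size p <= n.+1)%N -> f p`_n != 0 -> f (lead_coef p) != 0.
Proof.
move=> sp fpn; have pn : p`_n != 0 by apply: contraNneq fpn => ->; rewrite rmorph0.
by have [-> _] := lead_coef_top sp pn.
Qed.

Lemma resultant_root (A : comNzRingType) (p q : {poly A}) u :
  resultant p q != 0 -> (1 < size p)%N -> (1 < size q)%N -> root p u -> ~~ root q u.
Proof.
move=> pq sp sq /rootP pu; apply/negP => /rootP qu.
have [[u1 u2] /= _ e] := resultant_in_ideal sp sq.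
move: (congr1 (fun r => r.[u]) e); rewrite hornerC hornerD !hornerM pu qu !mulr0 addr0.
by move=> e0; rewrite e0 eqxx in pq.
Qed.

Lemma resultant_neq0 (F : closedFieldType) (p q : {poly F}) :
  (forall u, root p u -> ~~ root q u) -> resultant p q != 0.
Proof.
move=> h; rewrite resultant_eq0 -leqNgt; have [sg|//] := ltnP 1 (size (gcdp p q)).
have [u ru] : exists u, root (gcdp p q) u by apply/closed_rootP; rewrite neq_ltn sg orbT.
by have := h u (root_dvdp (dvdp_gcdl p q) ru); rewrite (root_dvdp (dvdp_gcdr p q) ru).
Qed.

Lemma resultant_deriv_separable (F : idomainType) (p : {poly F}) :
  p != 0 -> (resultant p p^`() != 0) = separable_poly p.
Proof.
move=> p0; rewrite resultant_eq0 -leqNgt unlock /coprimep eqn_leq.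
by rewrite lt0n size_poly_eq0 gcdp_eq0 negb_and p0 andbT.
Qed.

Lemma separable_roots (F : closedFieldType) (p : {poly F}) : p != 0 -> separable_poly p ->
  exists2 rs : seq F, uniq rs /\ size rs = (size p).-1 & forall u, root p u = (u \in rs).
Proof.
move=> p0 sep; have [rs e] := closed_field_poly_normal p.
have l0 : lead_coef p != 0 by rewrite lead_coef_eq0.
exists rs; last by move=> u; rewrite {1}e rootZ // root_prod_XsubC.
split; last by rewrite {1}e size_scale // size_prod_XsubC.
by rewrite -separable_prod_XsubC -(eqp_separable (eqp_scale _ l0)) -e.
Qed.

Lemma roots_separable (F : fieldType) (p : {poly F}) (rs : seq F) :
  uniq rs -> size p = (size rs).+1 -> all (root p) rs -> separable_poly p.
Proof.
move=> urs sp rrs; have p0 : p != 0 by rewrite -size_poly_eq0 sp.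
have l0 : lead_coef p != 0 by rewrite lead_coef_eq0.
have urs' : uniq_roots rs by rewrite uniq_rootsE.
rewrite (all_roots_prod_XsubC sp rrs urs').
by rewrite (eqp_separable (eqp_scale _ l0)) separable_prod_XsubC.
Qed.

Lemma root_quadratic (F : fieldType) (p : {poly F}) r1 r2 r : (size p <= 3)%N -> p != 0 ->
  r1 != r2 -> root p r1 -> root p r2 -> root p r -> r = r1 \/ r = r2.
Proof.
move=> sp p0 r12 pr1 pr2 pr.
have [->|rr1] := eqVneq r r1; first by left.
have [->|rr2] := eqVneq r r2; first by right.
have := max_poly_roots p0 (rs := [:: r; r1; r2]); rewrite /= pr pr1 pr2 !inE !negb_or rr1 rr2 r12.
by move=> /(_ isT isT); rewrite ltnNge sp.
Qed.

Section BinaryVectors.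
Variable A : comNzRingType.
Implicit Types (x y u v w : 'I_2 -> A) (l : A).

Definition vec2 (a b : A) : 'I_2 -> A := fun i => if nat_of_ord i == 0%N then a else b.
Definition vscale l x : 'I_2 -> A := fun i => l * x i.
Definition dot x y := \sum_(i < 2) x i * y i.
Definition perp x := vec2 (- x i1) (x i0).
Definition det2 x y := x i0 * y i1 - x i1 * y i0.

Definition vec_neq0 x := (x i0 != 0) || (x i1 != 0).

Lemma vec_neq0P x : reflect (exists i, x i != 0) (vec_neq0 x).
Proof.
apply: (iffP orP).
  by case=> h; [exists i0 | exists i1].
by case=> i; case: (ord2P i) => -> h; [left | right].
Qed.

Lemma vec2_eq x y : x i0 = y i0 -> x i1 = y i1 -> x = y.
Proof. by move=> e0 e1; apply: functional_extensionality => i; case: (ord2P i) => ->. Qed.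

Lemma dotE x y : dot x y = x i0 * y i0 + x i1 * y i1.
Proof. exact: big_ord2. Qed.

Lemma dot_inj u v : (forall a, dot a u = dot a v) -> u = v.
Proof.
move=> h; apply: vec2_eq.
  by have := h (vec2 1 0); rewrite !dotE /vec2 /= !mul1r !mul0r !addr0.
by have := h (vec2 0 1); rewrite !dotE /vec2 /= !mul1r !mul0r !add0r.
Qed.

Lemma dotC x y : dot x y = dot y x.
Proof. by rewrite !dotE mulrC [x i1 * _]mulrC. Qed.

Lemma dot_scalel l x y : dot (vscale l x) y = l * dot x y.
Proof. rewrite !dotE /vscale; ring. Qed.

Lemma dot_scaler l x y : dot x (vscale l y) = l * dot x y.
Proof. rewrite !dotE /vscale; ring. Qed.

Lemma dot_vec0 x : dot x (vec2 0 0) = 0.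
Proof. rewrite dotE /vec2 /=; ring. Qed.

Lemma dot_scale l x y : dot (vscale l x) (vscale l y) = l ^+ 2 * dot x y.
Proof. rewrite !dotE /vscale; ring. Qed.

Lemma dot_perp x y : dot x (perp y) = det2 y x.
Proof. rewrite dotE /perp /det2 /vec2 /=; ring. Qed.

Lemma det2C x y : det2 y x = - det2 x y.
Proof. rewrite /det2; ring. Qed.

Lemma det2_scaler x y l : det2 x (vscale l y) = l * det2 x y.
Proof. rewrite /det2 /vscale; ring. Qed.

Lemma dot_perp_self x : dot (perp x) x = 0.
Proof. rewrite dotE /perp /vec2 /=; ring. Qed.

Lemma dot_perpK x : dot (perp x) (perp x) = dot x x.
Proof. rewrite !dotE /perp /vec2 /=; ring. Qed.

Lemma dot_expand u w i :
  dot u u * w i = dot u w * u i + dot (perp u) w * perp u i.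
Proof. by rewrite !dotE /perp /vec2; case: (ord2P i) => -> /=; ring. Qed.

Lemma dot_vec2_1 (u : A) : dot (vec2 1 u) (vec2 1 u) = pI.[u].
Proof. rewrite dotE /pI /vec2 /= !hornerE; ring. Qed.

Lemma det2_scalel_self x l : det2 (vscale l x) x = 0.
Proof. rewrite /det2 /vscale; ring. Qed.

Lemma det2_scaler_self x l : det2 x (vscale l x) = 0.
Proof. rewrite /det2 /vscale; ring. Qed.

End BinaryVectors.

Section Dehomogenization.
Variable K : fieldType.
Implicit Types (x : 'I_2 -> K).

Lemma vec_neq0_dot x : dot x x != 0 -> vec_neq0 x.
Proof.
apply: contraNT; rewrite negb_or !negbK dotE => /andP[/eqP -> /eqP ->].
by rewrite mulr0 addr0.
Qed.

Lemma orth_perp (u w : 'I_2 -> K) : dot u w = 0 -> dot u u != 0 ->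
  w = vscale (dot (perp u) w / dot u u) (perp u).
Proof.
move=> uw uu; apply: functional_extensionality => i; rewrite /vscale.
apply: (mulfI uu); rewrite dot_expand uw mul0r add0r; field.
by rewrite uu.
Qed.

Lemma det2_eq0_scale x y : vec_neq0 x -> det2 x y = 0 -> exists l, y = vscale l x.
Proof.
rewrite /det2 => /orP hx /eqP; rewrite subr_eq0 => /eqP hd.
case: hx => hx; [exists (y i0 / x i0) | exists (y i1 / x i1)];
  apply: vec2_eq; rewrite /vscale; try by field.
- by apply: (mulfI hx); rewrite hd; field.
- by apply: (mulfI hx); rewrite -hd; field.
Qed.

Lemma vec2_affine x : x i0 != 0 -> x = vscale (x i0) (vec2 1 (x i1 / x i0)).
Proof. by move=> x0; apply: vec2_eq; rewrite /vscale /vec2 /=; field. Qed.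

Lemma homog_root_affine (F : ('I_2 -> K) -> K) d x :
    (forall l y, F (vscale l y) = l ^+ d * F y) -> F (vec2 0 1) != 0 ->
    vec_neq0 x -> F x = 0 ->
  x i0 != 0 /\ F (vec2 1 (x i1 / x i0)) = 0.
Proof.
move=> Fhom F01 x_neq0 Fx0; have [x0|x0] := eqVneq (x i0) 0.
  have ex : x = vscale (x i1) (vec2 0 1) by apply: vec2_eq; rewrite /vscale /vec2 /= ?x0; ring.
  move: x_neq0; rewrite /vec_neq0 x0 eqxx /= => x_neq0.
  by move/eqP: Fx0; rewrite ex Fhom mulf_eq0 expf_eq0 (negPf x_neq0) (negPf F01) andbF.
split=> //; move/eqP: Fx0; rewrite {1}(vec2_affine x0) Fhom mulf_eq0 expf_eq0 (negPf x0).
by rewrite andbF => /eqP.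
Qed.

End Dehomogenization.

Section Arrays.
Variables (A : comNzRingType) (T : 'I_2 -> 'I_2 -> 'I_2 -> A).
Implicit Types (x y a b c w : 'I_2 -> A).

Definition contr1 b c : 'I_2 -> A := fun i => \sum_(j < 2) \sum_(k < 2) T i j k * b j * c k.
Definition contr2 a c : 'I_2 -> A := fun j => \sum_(i < 2) \sum_(k < 2) T i j k * a i * c k.
Definition contr3 a b : 'I_2 -> A := fun k => \sum_(i < 2) \sum_(j < 2) T i j k * a i * b j.
Definition contr a b c := dot (contr3 a b) c.

(* When [T] is symmetric in its first two slots, [Mperp] is a traceless symmetric matrix,
   hence squares to [msq] times the identity ([MperpK]). *)
Definition ptrace : 'I_2 -> A := fun k => T i0 i0 k + T i1 i1 k.
Definition ptrace_perp := perp ptrace.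
Definition Mperp x := contr2 x ptrace_perp.
Definition msq := Mperp (vec2 1 0) i0 ^+ 2 + Mperp (vec2 1 0) i1 ^+ 2.
Definition ptrace_sq := dot ptrace ptrace.

(* The zeros of [Pform] give the critical points on [X21], those of [Qform] the others;
   [Vform], [Eform] and [dot x x] vanish at the degenerate zeros. *)
Definition Pform x := contr (perp x) x (contr3 x x).
Definition Qform x := contr x (Mperp x) ptrace.
Definition Eform x := det2 x (Mperp x).
Definition Vform x := contr3 x x i0.
Definition Cform x := contr x x (perp x).

(* The dehomogenizations [F (1, X)] of the forms, expanded monomial by monomial; note that
   [perp x i = sgn i * x (1 - i)]. *)
Definition sgn (i : 'I_2) : A := if nat_of_ord i == 0%N then -1 else 1.

Definition pP : {poly A} :=
  \sum_(i < 2) \sum_(j < 2) \sum_(k < 2) \sum_(a < 2) \sum_(b < 2)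
    (sgn i * T i j k * T a b k) *: 'X^((1 - i) + j + a + b).
Definition pQ : {poly A} :=
  \sum_(i < 2) \sum_(j < 2) \sum_(k < 2) \sum_(a < 2) \sum_(c < 2)
    (T i j k * T a j c * ptrace_perp c * ptrace k) *: 'X^(i + a).
Definition pE : {poly A} :=
  \sum_(j < 2) \sum_(a < 2) \sum_(c < 2) (sgn j * T a j c * ptrace_perp c) *: 'X^((1 - j) + a).
Definition pV : {poly A} := \sum_(a < 2) \sum_(b < 2) T a b i0 *: 'X^(a + b).

Ltac expand := rewrite /Pform /Qform /Eform /Vform /Cform /Mperp /ptrace_perp /contr /contr1 /contr2
  /contr3 /ptrace /dot /perp /det2 /vscale /vec2 /sgn ?big_ord2 /=.

Lemma contr_dot1 a b c : contr a b c = dot a (contr1 b c).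
Proof. expand; ring. Qed.

Lemma contr_dot2 a b c : contr a b c = dot b (contr2 a c).
Proof. expand; ring. Qed.

Lemma contr_scaler l a b c : contr a b (vscale l c) = l * contr a b c.
Proof. exact: dot_scaler. Qed.

Lemma contr_scalem l a b c : contr a (vscale l b) c = l * contr a b c.
Proof. expand; ring. Qed.

Lemma contr2_scaler l a c : contr2 a (vscale l c) = vscale l (contr2 a c).
Proof. by apply: vec2_eq; expand; ring. Qed.

Lemma contr_expand1 u a b c :
  dot u u * contr a b c = dot u a * contr u b c + dot (perp u) a * contr (perp u) b c.
Proof. expand; ring. Qed.

Lemma Mperp_scale l x : Mperp (vscale l x) = vscale l (Mperp x).
Proof. by apply: vec2_eq; expand; ring. Qed.

Lemma contr_vec0l b c : contr (vec2 0 0) b c = 0.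
Proof. expand; ring. Qed.

Lemma contr_vec0m a c : contr a (vec2 0 0) c = 0.
Proof. expand; ring. Qed.

Lemma contr_vec0r a b : contr a b (vec2 0 0) = 0.
Proof. by rewrite /contr dot_vec0. Qed.

Lemma contr1_scale l l' b c : contr1 (vscale l b) (vscale l' c) = vscale (l * l') (contr1 b c).
Proof. by apply: vec2_eq; expand; ring. Qed.

Lemma contr2_scale l l' a c : contr2 (vscale l a) (vscale l' c) = vscale (l * l') (contr2 a c).
Proof. by apply: vec2_eq; expand; ring. Qed.

Lemma contr3_scale l l' a b : contr3 (vscale l a) (vscale l' b) = vscale (l * l') (contr3 a b).
Proof. by apply: vec2_eq; expand; ring. Qed.

Lemma contr1_eqP b c x s : (forall a, contr a b c = dot x a * s) <-> contr1 b c = vscale s x.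
Proof.
split=> [h | h a]; last by rewrite contr_dot1 h dot_scaler dotC mulrC.
by apply: dot_inj => a; rewrite -contr_dot1 h dot_scaler dotC mulrC.
Qed.

Lemma contr2_eqP a c y s : (forall b, contr a b c = dot y b * s) <-> contr2 a c = vscale s y.
Proof.
split=> [h | h b]; last by rewrite contr_dot2 h dot_scaler dotC mulrC.
by apply: dot_inj => b; rewrite -contr_dot2 h dot_scaler dotC mulrC.
Qed.

Lemma contr3_eqP a b w s : (forall c, contr a b c = dot w c * s) <-> contr3 a b = vscale s w.
Proof.
split=> [h | h c]; last by rewrite /contr h dot_scalel mulrC.
by apply: dot_inj => c; rewrite dotC -/(contr a b c) h dot_scaler dotC mulrC.
Qed.

Lemma Pform_scale l x : Pform (vscale l x) = l ^+ 4 * Pform x.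
Proof. expand; ring. Qed.

Lemma Qform_scale l x : Qform (vscale l x) = l ^+ 2 * Qform x.
Proof. expand; ring. Qed.

Lemma Cform_scale l x : Cform (vscale l x) = l ^+ 3 * Cform x.
Proof. expand; ring. Qed.

Lemma Cform_det2 x : Cform x = det2 x (contr3 x x).
Proof. by rewrite /Cform /contr dot_perp. Qed.

Lemma horner_pP u : pP.[u] = Pform (vec2 1 u).
Proof. rewrite /pP; expand; rewrite !hornerE /=; ring. Qed.

Lemma coef_pP4 : pP`_4 = Pform (vec2 0 1).
Proof. rewrite /pP; expand; rewrite !(coefD, coefZ, coefXn) /=; ring. Qed.

Lemma horner_pQ u : pQ.[u] = Qform (vec2 1 u).
Proof. rewrite /pQ; expand; rewrite !hornerE /=; ring. Qed.

Lemma horner_pE u : pE.[u] = Eform (vec2 1 u).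
Proof. rewrite /pE; expand; rewrite !hornerE /=; ring. Qed.

Lemma horner_pV u : pV.[u] = Vform (vec2 1 u).
Proof. rewrite /pV; expand; rewrite !hornerE /=; ring. Qed.

Lemma coef_pQ2 : pQ`_2 = Qform (vec2 0 1).
Proof. rewrite /pQ; expand; rewrite !(coefD, coefZ, coefXn) /=; ring. Qed.

Lemma coef_pE2 : pE`_2 = Eform (vec2 0 1).
Proof. rewrite /pE; expand; rewrite !(coefD, coefZ, coefXn) /=; ring. Qed.

Lemma coef_pV2 : pV`_2 = Vform (vec2 0 1).
Proof. rewrite /pV; expand; rewrite !(coefD, coefZ, coefXn) /=; ring. Qed.

Lemma size_pP : (size pP <= 5)%N.
Proof.
apply: size_sum_le => i; apply: size_sum_le => j; apply: size_sum_le => k.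
apply: size_sum_le => a; apply: size_sum_le => b; apply: size_scale_Xn_le.
by rewrite -[4%N]/(1 + 1 + 1 + 1)%N !leq_add ?leq_subr // -ltnS.
Qed.

Lemma size_pQ : (size pQ <= 3)%N.
Proof.
apply: size_sum_le => i; apply: size_sum_le => j; apply: size_sum_le => k.
apply: size_sum_le => a; apply: size_sum_le => c; apply: size_scale_Xn_le.
by rewrite -[2%N]/(1 + 1)%N leq_add // -ltnS.
Qed.

Lemma size_pE : (size pE <= 3)%N.
Proof.
apply: size_sum_le => j; apply: size_sum_le => a; apply: size_sum_le => c.
by apply: size_scale_Xn_le; rewrite -[2%N]/(1 + 1)%N leq_add ?leq_subr // -ltnS.
Qed.

Lemma size_pV : (size pV <= 3)%N.
Proof.
apply: size_sum_le => a; apply: size_sum_le => b.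
by apply: size_scale_Xn_le; rewrite -[2%N]/(1 + 1)%N leq_add // -ltnS.
Qed.


(* The genericity conditions of part (1); [disc_sym] adds those of part (2). *)
Definition lead21 := (pP`_4 * pV`_2) * (pQ`_2 * pE`_2).
Definition disc21 := lead21 * (ptrace_sq * msq * resultant pP pP^`() * resultant pP pI
  * resultant pP pV * resultant pQ pI * resultant pQ pE).
Definition disc_sym := disc21 * ptrace i1 * Cform ptrace_perp.

Section Symmetric12.
Hypothesis T12 : forall i j k, T i j k = T j i k.

Let T100 := T12 i1 i0 i0.
Let T101 := T12 i1 i0 i1.

Lemma contr1_contr2 b c : contr1 b c = contr2 b c.
Proof. by apply: vec2_eq; expand; rewrite ?T100 ?T101; ring. Qed.

Lemma contrC12 a b c : contr a b c = contr b a c.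
Proof. by rewrite contr_dot1 contr_dot2 contr1_contr2 dotC. Qed.

Lemma contr3C a b : contr3 a b = contr3 b a.
Proof. by apply: vec2_eq; expand; rewrite ?T100 ?T101; ring. Qed.

Lemma det2_contr1 x y w :
  det2 (contr1 x w) y + det2 x (contr1 y w) = dot ptrace w * det2 x y.
Proof. expand; rewrite ?T100 ?T101; ring. Qed.

Lemma Mperp_sym x y : dot (Mperp x) y = dot x (Mperp y).
Proof. expand; rewrite ?T100 ?T101; ring. Qed.

Lemma MperpK x : Mperp (Mperp x) = vscale msq x.
Proof. by apply: vec2_eq; rewrite /msq; expand; rewrite ?T100 ?T101; ring. Qed.

Lemma Qform_Mperp x : Qform (Mperp x) = msq * Qform x.
Proof. rewrite /msq; expand; rewrite ?T100 ?T101; ring. Qed.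

Section Symmetric.
Hypothesis T23 : forall i j k, T i j k = T i k j.

Let T010 := T23 i0 i1 i0.
Let T110 := T23 i1 i1 i0.

Ltac sym_expand := expand; rewrite ?T100 ?T010 ?T110 ?T101; ring.

Lemma contr1C b c : contr1 b c = contr1 c b.
Proof. by apply: vec2_eq; sym_expand. Qed.

Lemma contr2_contr3 a c : contr2 a c = contr3 a c.
Proof. by apply: vec2_eq; sym_expand. Qed.

Lemma contrC23 a b c : contr a b c = contr a c b.
Proof. by sym_expand. Qed.

Lemma Pform_factor x : Pform x = Cform x * dot ptrace x.
Proof. by sym_expand. Qed.

End Symmetric.
End Symmetric12.

End Arrays.

Section ArrayMorphisms.
Variables (A B : comNzRingType) (f : {rmorphism A -> B}).
Variable T : 'I_2 -> 'I_2 -> 'I_2 -> A.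
Local Notation fT := (fun i j k => f (T i j k)).

Ltac push_morph := rewrite /Pform /Qform /Eform /Vform /Cform /msq /ptrace_sq /Mperp /ptrace_perp
  /contr /contr3 /contr2 /ptrace /dot /perp /det2 /vec2 ?big_ord2 /=
  ?(rmorphD, rmorphN, rmorphM, rmorphXn, rmorph1, rmorph0); reflexivity.

Lemma msq_rmorph : f (msq T) = msq fT.
Proof. by push_morph. Qed.

Lemma ptrace_sq_rmorph : f (ptrace_sq T) = ptrace_sq fT.
Proof. by push_morph. Qed.

Lemma ptrace_rmorph k : f (ptrace T k) = ptrace fT k.
Proof. by push_morph. Qed.

Lemma Cform_ptrace_perp_rmorph : f (Cform T (ptrace_perp T)) = Cform fT (ptrace_perp fT).
Proof. by push_morph. Qed.

Lemma ptrace_perp_rmorph k : f (ptrace_perp T k) = ptrace_perp fT k.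
Proof. by case: (ord2P k) => ->; push_morph. Qed.

Lemma sgn_rmorph i : f (sgn A i) = sgn B i.
Proof. by case: (ord2P i) => ->; rewrite /sgn /= ?rmorphN rmorph1. Qed.

Ltac map_monomials :=
  rewrite ?rmorph_sum; apply: eq_bigr => ? _; first [map_monomials |
  rewrite /= map_polyZ map_polyXn ?rmorphM ?sgn_rmorph ?ptrace_perp_rmorph ?ptrace_rmorph].

Lemma map_pP : map_poly f (pP T) = pP fT.
Proof. by rewrite /pP; map_monomials. Qed.

Lemma map_pQ : map_poly f (pQ T) = pQ fT.
Proof. by rewrite /pQ; map_monomials. Qed.

Lemma map_pE : map_poly f (pE T) = pE fT.
Proof. by rewrite /pE; map_monomials. Qed.

Lemma map_pV : map_poly f (pV T) = pV fT.
Proof. by rewrite /pV; map_monomials. Qed.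

Lemma map_pI : map_poly f pI = pI.
Proof. by rewrite /pI rmorphD rmorph1 /= map_polyXn. Qed.

End ArrayMorphisms.

Section DiscriminantFactors.
Variables (F : idomainType) (T : 'I_2 -> 'I_2 -> 'I_2 -> F).

Lemma disc21_factors : disc21 T != 0 ->
  [/\ [/\ (pP T)`_4 != 0, (pV T)`_2 != 0, (pQ T)`_2 != 0 & (pE T)`_2 != 0],
      [/\ ptrace_sq T != 0, msq T != 0 & resultant (pP T) (pP T)^`() != 0] &
      [/\ resultant (pP T) pI != 0, resultant (pP T) (pV T) != 0,
          resultant (pQ T) pI != 0 & resultant (pQ T) (pE T) != 0]].
Proof.
rewrite /disc21 /lead21 !mulf_eq0 !negb_or.
case/andP=> /andP[/andP[-> ->] /andP[-> ->]].
by case/andP=> /andP[/andP[/andP[/andP[/andP[-> ->] ->] ->] ->] ->] ->.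
Qed.

Lemma disc_sym_factors :
  disc_sym T != 0 -> [/\ disc21 T != 0, ptrace T i1 != 0 & Cform T (ptrace_perp T) != 0].
Proof. by rewrite /disc_sym !mulf_eq0 !negb_or => /andP[/andP[-> ->] ->]. Qed.

End DiscriminantFactors.

Section DiscriminantMorphism.
Variables (A : comNzRingType) (B : numDomainType) (f : {rmorphism A -> B}).
Variable T : 'I_2 -> 'I_2 -> 'I_2 -> A.
Local Notation fT := (fun i j k => f (T i j k)).

Lemma lead21_rmorph : f (lead21 T) = lead21 fT.
Proof. by rewrite /lead21 !rmorphM -!coef_map map_pP map_pV map_pQ map_pE. Qed.

(* Both sides vanish when a leading coefficient does; otherwise resultants commute with [f]. *)
Lemma disc21_rmorph : f (disc21 T) = disc21 fT.
Proof.
rewrite /disc21 rmorphM lead21_rmorph; have [->|] := eqVneq (lead21 fT) 0; first by rewrite !mul0r.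
rewrite /lead21 -map_pP -map_pV -map_pQ -map_pE !coef_map !mulf_eq0 !negb_or.
case/andP=> /andP[P4 V2] /andP[Q2 E2]; congr (_ * _).
have P'3 : f (pP T)^`()`_3 != 0 by rewrite coef_deriv rmorphMn mulrn_eq0 negb_or P4.
have I2 : f (pI : {poly A})`_2 != 0 by rewrite coef_pI2 rmorph1 oner_eq0.
have lP := lead_coef_rmorph_neq0 (size_pP T) P4.
have lP' := lead_coef_rmorph_neq0 (size_deriv_le (size_pP T)) P'3.
have lV := lead_coef_rmorph_neq0 (size_pV T) V2.
have lQ := lead_coef_rmorph_neq0 (size_pQ T) Q2.
have lE := lead_coef_rmorph_neq0 (size_pE T) E2.
have lI := lead_coef_rmorph_neq0 (@size_pI_le A) I2.
rewrite !rmorphM msq_rmorph ptrace_sq_rmorph !rmorph_resultant // -deriv_map.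
by rewrite map_pP map_pV map_pQ map_pE map_pI.
Qed.

Lemma disc_sym_rmorph : f (disc_sym T) = disc_sym fT.
Proof. by rewrite /disc_sym -disc21_rmorph -ptrace_rmorph -Cform_ptrace_perp_rmorph !rmorphM. Qed.

End DiscriminantMorphism.

Section RankOneCritical.
Variable R : realType.
Local Notation C := R[i].
Local Notation vec := (vec R).
Local Notation tensor := (tensor R).
Implicit Types (t z : tensor) (x y w a b c : vec).

Definition tarr t : 'I_2 -> 'I_2 -> 'I_2 -> C := fun i j k => t (i, j, k).

Lemma big_triple (M : nmodType) (F : 'I_2 * 'I_2 * 'I_2 -> M) :
  \sum_p F p = \sum_(i < 2) \sum_(j < 2) \sum_(k < 2) F (i, j, k).
Proof. by rewrite pair_bigA pair_bigA /=; apply: eq_bigr => -[[i j] k]. Qed.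

Lemma tprodE x y w i j k : tprod x y w (i, j, k) = x i * y j * w k.
Proof. by rewrite ffunE. Qed.

Lemma tensor3P t z : (forall i j k, t (i, j, k) = z (i, j, k)) -> t = z.
Proof. by move=> h; apply/ffunP => -[[i j] k]. Qed.

Lemma tprodP x y w x' y' w' :
  (forall i j k, x i * y j * w k = x' i * y' j * w' k) -> tprod x y w = tprod x' y' w'.
Proof. by move=> h; apply: tensor3P => i j k; rewrite !tprodE. Qed.

Lemma tprod_neq0 x y w : (tprod x y w != 0) = [&& vec_neq0 x, vec_neq0 y & vec_neq0 w].
Proof.
apply/idP/idP => [nz | /and3P[/vec_neq0P[i xi] /vec_neq0P[j yj] /vec_neq0P[k wk]]].
  apply/and3P; split; apply: contraNT nz; rewrite negb_or !negbK => /andP[/eqP h0 /eqP h1];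
    apply/eqP/tensor3P => i j k; rewrite tprodE ffunE;
    by [case: (ord2P i) => ->; rewrite ?h0 ?h1 !mul0r
       | case: (ord2P j) => ->; rewrite ?h0 ?h1 mulr0 mul0r
       | case: (ord2P k) => ->; rewrite ?h0 ?h1 mulr0].
apply: contraNneq (mulf_neq0 (mulf_neq0 xi yj) wk) => e.
by rewrite -tprodE e ffunE.
Qed.

Lemma tprod_swap_neq x y w : det2 x y != 0 -> vec_neq0 w -> tprod x y w != tprod y x w.
Proof.
move=> xy /vec_neq0P[m wm]; apply: contra_neq xy => e.
move: (congr1 (fun z => z (i0, i1, m)) e); rewrite /= !tprodE /det2 => {}e.
by apply/eqP; rewrite subr_eq0; apply/eqP/(mulIf wm); rewrite e; ring.
Qed.

Lemma tprod_notX21 x y w : det2 x y != 0 -> vec_neq0 w -> ~ X21 (tprod x y w).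
Proof.
move=> xy /vec_neq0P[m wm] [a [b e]]; move/eqP: xy; apply.
have : tprod x y w (i0, i1, m) = tprod x y w (i1, i0, m) by rewrite e !tprodE; ring.
rewrite !tprodE /det2 => e'.
by apply/eqP; rewrite subr_eq0; apply/eqP/(mulIf wm); rewrite e'; ring.
Qed.

Lemma qtDr t u v : qt t (u + v) = qt t u + qt t v.
Proof. by rewrite /qt -big_split; apply: eq_bigr => p _; rewrite ffunE mulrDr. Qed.

Lemma qt_tprod t a b c : qt t (tprod a b c) = contr (tarr t) a b c.
Proof. rewrite /qt big_triple /contr /contr3 /tarr /dot !big_ord2 !ffunE /=; ring. Qed.

Lemma qt_sub_tprod t x y w a b c :
  qt (t - tprod x y w) (tprod a b c) = contr (tarr t) a b c - dot x a * dot y b * dot w c.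
Proof. rewrite /qt big_triple /contr /contr3 /tarr /dot !big_ord2 !ffunE /=; ring. Qed.

Lemma qt_tangent t x y w a b c :
  qt (t - tprod x y w) (tprod a y w + tprod x b w + tprod x y c) =
    (contr (tarr t) a y w - dot x a * (dot y y * dot w w))
  + (contr (tarr t) x b w - dot y b * (dot x x * dot w w))
  + (contr (tarr t) x y c - dot w c * (dot x x * dot y y)).
Proof. rewrite !qtDr !qt_sub_tprod; ring. Qed.

(* The singular vector equations of [x (x) y (x) w], with the singular value absorbed
   in the factors. *)
Definition crit_eqs t x y w :=
  [/\ contr1 (tarr t) y w = vscale (dot y y * dot w w) x,
      contr2 (tarr t) x w = vscale (dot x x * dot w w) y &
      contr3 (tarr t) x y = vscale (dot x x * dot y y) w].

Lemma crit_eqs_tangent t x y w a b c : crit_eqs t x y w ->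
  qt (t - tprod x y w) (tprod a y w + tprod x b w + tprod x y c) = 0.
Proof.
case=> /contr1_eqP e1 /contr2_eqP e2 /contr3_eqP e3.
by rewrite qt_tangent e1 e2 e3 !subrr !addr0.
Qed.

Lemma crit_eqs_scale t x y w al be ga : al * be * ga = 1 ->
  crit_eqs t x y w -> crit_eqs t (vscale al x) (vscale be y) (vscale ga w).
Proof.
move=> hp [e1 e2 e3].
have /and3P[al0 be0 ga0] : [&& al != 0, be != 0 & ga != 0].
  by move: (oner_neq0 C); rewrite -hp !mulf_eq0 !negb_or => /andP[/andP[-> ->] ->].
have -> : al = (be * ga)^-1.
  by apply: (mulIf (mulf_neq0 be0 ga0)); rewrite mulVf ?mulf_neq0 // mulrA.
split; rewrite ?contr1_scale ?contr2_scale ?contr3_scale ?e1 ?e2 ?e3 !dot_scale;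
  by apply: vec2_eq; rewrite /vscale; field; rewrite be0 ga0.
Qed.

Lemma tprod_eq_scale x y w x' y' w' : tprod x y w = tprod x' y' w' -> tprod x y w != 0 ->
  exists al be ga, [/\ x' = vscale al x, y' = vscale be y, w' = vscale ga w & al * be * ga = 1].
Proof.
move=> E nz; move: (nz); rewrite tprod_neq0.
case/and3P=> /vec_neq0P[i xi] /vec_neq0P[j yj] /vec_neq0P[k wk].
have e (n1 n2 n3 : 'I_2) : x n1 * y n2 * w n3 = x' n1 * y' n2 * w' n3 by rewrite -!tprodE E.
have : x' i * y' j * w' k != 0 by rewrite -e !mulf_neq0.
rewrite !mulf_eq0 !negb_or => /andP[/andP[xi' yj'] wk'].
exists ((y j * w k) / (y' j * w' k)), ((x i * w k) / (x' i * w' k)), ((x i * y j) / (x' i * y' j)).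
split; try (apply: functional_extensionality => n; rewrite /vscale).
- transitivity ((x' n * y' j * w' k) / (y' j * w' k)); first by field; rewrite yj' wk'.
  by rewrite -e; field; rewrite yj' wk'.
- transitivity ((x' i * y' n * w' k) / (x' i * w' k)); first by field; rewrite xi' wk'.
  by rewrite -e; field; rewrite xi' wk'.
- transitivity ((x' i * y' j * w' n) / (x' i * y' j)); first by field; rewrite xi' yj'.
  by rewrite -e; field; rewrite xi' yj'.
transitivity ((x i * y j * w k) ^+ 2 / (x' i * y' j * w' k) ^+ 2).
  by field; rewrite xi' yj' wk'.
by rewrite e divff // sqrf_eq0 !mulf_neq0.
Qed.

Lemma crit_eqs_tprod t x y w x' y' w' : tprod x y w = tprod x' y' w' -> tprod x y w != 0 ->
  crit_eqs t x y w -> crit_eqs t x' y' w'.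
Proof.
move=> E nz eqs; have [al [be [ga [-> -> -> hp]]]] := tprod_eq_scale E nz.
exact: crit_eqs_scale.
Qed.

Lemma critical_X3P t x y w :
  critical (@X3 R) (@T3 R) t (tprod x y w) <-> tprod x y w != 0 /\ crit_eqs t x y w.
Proof.
split=> [[nz [_ tangent]] | [nz eqs]].
  have D a b c : (contr (tarr t) a y w - dot x a * (dot y y * dot w w))
      + (contr (tarr t) x b w - dot y b * (dot x x * dot w w))
      + (contr (tarr t) x y c - dot w c * (dot x x * dot y y)) = 0.
    by rewrite -qt_tangent; apply: tangent; exists x, y, w; split=> //; exists a, b, c.
  split=> //; split; [apply/contr1_eqP => a | apply/contr2_eqP => b | apply/contr3_eqP => c];
    apply/eqP; rewrite -subr_eq0; apply/eqP.
  - have := D a (vec2 0 0) (vec2 0 0).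
    by rewrite contr_vec0m contr_vec0r !dot_vec0 => <-; ring.
  - have := D (vec2 0 0) b (vec2 0 0).
    by rewrite contr_vec0l contr_vec0r !dot_vec0 => <-; ring.
  - have := D (vec2 0 0) (vec2 0 0) c.
    by rewrite contr_vec0l contr_vec0m !dot_vec0 => <-; ring.
split=> //; split; first by exists x, y, w.
move=> u [x' [y' [w' [E [a [b [c ->]]]]]]].
by rewrite E; apply: crit_eqs_tangent; apply: crit_eqs_tprod eqs.
Qed.

Lemma S3_S21 t : S3 t -> S21 t.
Proof. by move=> tS i j k; case: (tS i j k). Qed.

Lemma S3_tarr23 t : S3 t -> forall i j k, tarr t i j k = tarr t i k j.
Proof. by move=> tS i j k; case: (tS i j k). Qed.

Lemma T21_T3 z u : T21 z u -> T3 z u.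
Proof. by move=> [x [w [-> [a [b ->]]]]]; exists x, x, w; split=> //; exists a, a, b. Qed.

Lemma Tsym3_T3 z u : Tsym3 z u -> T3 z u.
Proof. by move=> [x [-> [a ->]]]; exists x, x, x; split=> //; exists a, a, a. Qed.

(* The tangent directions of [X21] only see twice the first singular vector equation, which
   suffices in characteristic zero; similarly with a factor three for [Xsym3]. *)
Lemma critical_X21P t z : S21 t ->
  critical (@X21 R) (@T21 R) t z <-> critical (@X3 R) (@T3 R) t z /\ X21 z.
Proof.
move=> tS; split=> [[nz [[x [w ez]] tangent]] | [[nz [_ tangent]] hz]]; last first.
  by split=> //; split=> // u /T21_T3; apply: tangent.
split; last by exists x, w.
rewrite ez critical_X3P -ez; split=> //.
have D a b : 2 * (contr (tarr t) a x w - dot x a * (dot x x * dot w w))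
    + (contr (tarr t) x x b - dot w b * (dot x x * dot x x)) = 0.
  rewrite -[RHS](tangent (tprod a x w + tprod x a w + tprod x x b)); last first.
    by exists x, w; split=> //; exists a, b.
  by rewrite ez qt_tangent (contrC12 tS x a); ring.
have e1 : contr1 (tarr t) x w = vscale (dot x x * dot w w) x.
  apply/contr1_eqP => a; apply/eqP; rewrite -subr_eq0; apply/eqP.
  apply: (@mulfI _ 2); first by rewrite pnatr_eq0.
  rewrite mulr0 -[RHS](D a (vec2 0 0)).
  by rewrite contr_vec0r dot_vec0; ring.
split=> //; first by rewrite -(contr1_contr2 tS).
apply/contr3_eqP => c; apply/eqP; rewrite -subr_eq0; apply/eqP.
by rewrite -(D (vec2 0 0) c) contr_vec0l dot_vec0; ring.
Qed.

Lemma critical_XsymP t z : S3 t ->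
  critical (@Xsym3 R) (@Tsym3 R) t z <-> critical (@X3 R) (@T3 R) t z /\ Xsym3 z.
Proof.
move=> tS; have tS12 := S3_S21 tS.
have tS23 := S3_tarr23 tS.
split=> [[nz [[x ez] tangent]] | [[nz [_ tangent]] hz]]; last first.
  by split=> //; split=> // u /Tsym3_T3; apply: tangent.
split; last by exists x.
rewrite ez critical_X3P -ez; split=> //.
have e1 : contr1 (tarr t) x x = vscale (dot x x * dot x x) x.
  apply/contr1_eqP => a; apply/eqP; rewrite -subr_eq0; apply/eqP.
  apply: (@mulfI _ 3); first by rewrite pnatr_eq0.
  rewrite mulr0.
  rewrite -[RHS](tangent (tprod a x x + tprod x a x + tprod x x a)); last first.
    by exists x; split=> //; exists a.
  rewrite ez qt_tangent (contrC12 tS12 x a) (contrC23 tS12 tS23 x x a) (contrC12 tS12 x a); ring.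
split=> //; first by rewrite -(contr1_contr2 tS12).
by rewrite -(contr2_contr3 tS12 tS23) -(contr1_contr2 tS12).
Qed.

Lemma crit_eqs_perm12 t x y w : S21 t -> crit_eqs t x y w -> crit_eqs t y x w.
Proof.
move=> tS [e1 e2 e3]; split; rewrite ?(contr1_contr2 tS) // -?(contr1_contr2 tS) //.
by rewrite (contr3C tS) e3 mulrC.
Qed.

Lemma crit_eqs_perm23 t x y w : S3 t -> crit_eqs t x y w -> crit_eqs t x w y.
Proof.
move=> tS [e1 e2 e3].
have tS12 := S3_S21 tS.
have tS23 := S3_tarr23 tS.
split; first by rewrite (contr1C tS12 tS23) e1 mulrC.
  by rewrite (contr2_contr3 tS12 tS23).
by rewrite -(contr2_contr3 tS12 tS23).
Qed.

Lemma critical_perm12 t x y w : S21 t ->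
  critical (@X3 R) (@T3 R) t (tprod x y w) -> critical (@X3 R) (@T3 R) t (tprod y x w).
Proof.
move=> tS /critical_X3P[nz eqs]; apply/critical_X3P; split; last exact: crit_eqs_perm12.
by move: nz; rewrite !tprod_neq0 => /and3P[-> -> ->].
Qed.

Lemma critical_perm23 t x y w : S3 t ->
  critical (@X3 R) (@T3 R) t (tprod x y w) -> critical (@X3 R) (@T3 R) t (tprod x w y).
Proof.
move=> tS /critical_X3P[nz eqs]; apply/critical_X3P; split; last exact: crit_eqs_perm23.
by move: nz; rewrite !tprod_neq0 => /and3P[-> -> ->].
Qed.

Lemma singular_value_critical t z (sigma : C) a b c :
    critical (@X3 R) (@T3 R) t z -> z = tscale sigma (tprod a b c) ->
    dot a a = 1 -> dot b b = 1 -> dot c c = 1 ->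
  singular_value t z sigma.
Proof.
move=> crit ez qa qb qc.
have ez1 : z = tprod (vscale sigma a) b c.
  by rewrite ez; apply: tensor3P => i j k; rewrite !ffunE /vscale; ring.
have ez2 : tprod (vscale sigma a) b c = tprod a (vscale sigma b) c.
  by apply: tprodP => i j k; rewrite /vscale; ring.
have ez3 : tprod (vscale sigma a) b c = tprod a b (vscale sigma c).
  by apply: tprodP => i j k; rewrite /vscale; ring.
move: crit; rewrite ez1 critical_X3P => -[nz eqs].
have [e1 _ _] := eqs.
have [_ e2 _] := crit_eqs_tprod ez2 nz eqs.
have [_ _ e3] := crit_eqs_tprod ez3 nz eqs.
exists a, b, c; split=> //; first by rewrite -ez1.
move=> v; rewrite !qt_tprod; split.
- by rewrite contr_dot1 e1 qb qc mul1r !dot_scaler mul1r dotC.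
- by rewrite contr_dot2 e2 qa qc mul1r !dot_scaler mul1r dotC.
- by rewrite /contr e3 qa qb mul1r dot_scalel dot_scalel mul1r.
Qed.

Lemma singular_value_perm23 t a b c (sigma : C) : S3 t ->
  singular_value t (tprod a b c) sigma -> singular_value t (tprod a c b) sigma.
Proof.
move=> tS [x1 [x2 [x3 [q1 q2 q3 ez sv]]]].
have tS12 := S3_S21 tS.
have tS23 := S3_tarr23 tS.
exists x1, x3, x2; split=> //.
  apply: tensor3P => i j m; move: (congr1 (fun z => z (i, m, j)) ez).
  by rewrite !ffunE /= => e; rewrite mulrAC e; ring.
move=> v; have := sv v; rewrite !qt_tprod => -[e1 e2 e3].
by rewrite (contrC23 tS12 tS23 v) (contrC23 tS12 tS23 x1 v) (contrC23 tS12 tS23 x1 x3).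
Qed.

Lemma Xsym3_X21 z : Xsym3 z -> X21 z.
Proof. by case=> a ->; exists a, a. Qed.

End RankOneCritical.

Section PartiallySymmetric.
Variable R : realType.
Local Notation vec := (vec R).
Implicit Types (x y w : vec).

Variable t : tensor R.
Hypothesis tS : S21 t.
Local Notation T := (tarr t).
Local Notation k := (ptrace_sq T).
Local Notation s := (msq T).

Definition point21 x := tprod x x (vscale (dot x x ^+ 2)^-1 (contr3 T x x)).

Lemma crit_eqs_diag x w : crit_eqs t x x w ->
  Pform T x = 0 /\ contr3 T x x = vscale (dot x x ^+ 2) w.
Proof.
case=> e1 _ e3; split; last by rewrite e3 expr2.
by rewrite /Pform e3 contr_scaler contr_dot1 e1 dot_scaler dot_perp_self !mulr0.
Qed.

Lemma crit_eqs_point21 x : Pform T x = 0 -> dot x x != 0 ->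
  crit_eqs t x x (vscale (dot x x ^+ 2)^-1 (contr3 T x x)).
Proof.
move=> Px0 xx; set v := contr3 T x x.
have e1 : contr1 T x (vscale (dot x x ^+ 2)^-1 v) =
    vscale (dot x x * dot (vscale (dot x x ^+ 2)^-1 v) (vscale (dot x x ^+ 2)^-1 v)) x.
  apply/contr1_eqP => a; rewrite contr_scaler dot_scale.
  have := contr_expand1 T x a x v; rewrite -/(Pform T x) Px0 mulr0 addr0.
  rewrite {2}/contr -/v => e; apply: (mulfI xx); rewrite mulrCA e; field.
  by rewrite xx.
split=> //; first by rewrite -(contr1_contr2 tS).
by apply: vec2_eq; rewrite /vscale -/v; field; rewrite xx.
Qed.

Lemma point21_critical x : Pform T x = 0 -> dot x x != 0 -> Vform T x != 0 ->
  critical (@X3 R) (@T3 R) t (point21 x).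
Proof.
move=> Px0 xx Vx; apply/critical_X3P; split; last exact: crit_eqs_point21.
rewrite tprod_neq0 vec_neq0_dot //=; apply/orP; left.
by rewrite /vscale mulf_neq0 // invr_eq0 expf_neq0.
Qed.

Lemma point21_scale l x : l != 0 -> dot x x != 0 -> point21 (vscale l x) = point21 x.
Proof.
move=> l0 xx; rewrite /point21 contr3_scale dot_scale; apply: tprodP => i j m.
by rewrite /vscale; field; rewrite l0 xx.
Qed.

Lemma crit_eqs_diag_point21 x w : crit_eqs t x x w -> dot x x != 0 -> tprod x x w = point21 x.
Proof.
move=> eqs xx; rewrite /point21; have [_ ->] := crit_eqs_diag eqs; congr (tprod x x _).
by apply: functional_extensionality => i; rewrite /vscale mulrA mulVf ?mul1r // expf_neq0.
Qed.

Definition pair_point x := tprod x (Mperp T x) (vscale (dot x x * k)^-1 (ptrace_perp T)).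

Lemma dot_MperpK x : dot (Mperp T x) (Mperp T x) = s * dot x x.
Proof. by rewrite (Mperp_sym tS) (MperpK tS) dot_scaler. Qed.

Lemma crit_eqs_ptrace x y w : crit_eqs t x y w -> det2 x y != 0 -> dot (ptrace T) w = 0.
Proof.
case=> e1 e2 _ xy; apply/eqP; rewrite -(mulIr_eq0 _ (mulIf xy)) -(det2_contr1 tS).
by rewrite (contr1_contr2 tS) e2 e1 det2_scalel_self det2_scaler_self addr0.
Qed.

Lemma crit_eqs_pair x y w : tprod x y w != 0 -> crit_eqs t x y w -> det2 x y != 0 ->
  k != 0 -> s != 0 -> Qform T x = 0 /\ tprod x y w = pair_point x.
Proof.
move=> nz eqs xy k0 s0; have Lw := crit_eqs_ptrace eqs xy.
have [_ e2 e3] := eqs.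
pose c := dot (ptrace_perp T) w / k.
have ew : w = vscale c (ptrace_perp T) := orth_perp Lw k0.
have c0 : c != 0.
  apply: contraNneq nz => c0; apply/eqP/tensor3P => i j m.
  by rewrite tprodE ffunE ew c0 /vscale mul0r mulr0.
have ww : dot w w = c ^+ 2 * k by rewrite ew dot_scale dot_perpK.
have eMx : Mperp T x = vscale (c * dot x x * k) y.
  apply: functional_extensionality => i; apply: (mulfI c0).
  have := congr1 (fun v => v i) e2; rewrite ww ew contr2_scaler /vscale => ->; ring.
have xx : dot x x != 0.
  apply: contraNneq xy => xx0.
  have Mx0 : Mperp T x = vscale 0 y by rewrite eMx xx0 mulr0 mul0r.
  have x0 i : x i = 0.
    have := congr1 (fun v => v i) (MperpK tS x); rewrite Mx0 Mperp_scale /vscale mul0r.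
    by move/esym/eqP; rewrite mulf_eq0 (negPf s0) => /eqP.
  by rewrite /det2 !x0 !mul0r subrr.
have cxk : c * dot x x * k != 0 by apply: mulf_neq0; first exact: mulf_neq0.
have ey : y = vscale (c * dot x x * k)^-1 (Mperp T x).
  by apply: functional_extensionality => i; rewrite eMx /vscale mulrA mulVf ?mul1r.
split.
  rewrite /Qform eMx contr_scalem /contr e3 dot_scalel dotC Lw.
  by rewrite !mulr0.
rewrite /pair_point ey ew; apply: tprodP => i j m; rewrite /vscale; field.
by rewrite c0 xx k0.
Qed.

Lemma crit_eqs_pair_point x : Qform T x = 0 -> dot x x != 0 -> k != 0 ->
  crit_eqs t x (Mperp T x) (vscale (dot x x * k)^-1 (ptrace_perp T)).
Proof.
move=> Qx0 xx k0; set l := (dot x x * k)^-1.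
have ww : dot (vscale l (ptrace_perp T)) (vscale l (ptrace_perp T)) = l ^+ 2 * k.
  by rewrite dot_scale dot_perpK.
split; rewrite ?ww ?dot_MperpK.
- rewrite (contr1_contr2 tS) contr2_scaler -/(Mperp T _) (MperpK tS).
  by apply: functional_extensionality => i; rewrite /vscale /l; field; rewrite xx k0.
- rewrite contr2_scaler -/(Mperp T _).
  by apply: functional_extensionality => i; rewrite /vscale /l; field; rewrite xx k0.
apply: functional_extensionality => i; apply: (mulfI k0).
rewrite [LHS](dot_expand (ptrace T)) -/(ptrace_perp T) dotC.
rewrite -/(contr T x (Mperp T x) (ptrace T)) -/(Qform T x) Qx0 mul0r add0r dotC.
rewrite -/(contr T x (Mperp T x) (ptrace_perp T)) contr_dot2 -/(Mperp T x) dot_MperpK.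
by rewrite /vscale /l; field; rewrite xx k0.
Qed.

Lemma pair_point_critical x : Qform T x = 0 -> dot x x != 0 -> k != 0 -> s != 0 ->
  critical (@X3 R) (@T3 R) t (pair_point x).
Proof.
move=> Qx0 xx k0 s0; apply/critical_X3P; split; last exact: crit_eqs_pair_point.
rewrite tprod_neq0 !vec_neq0_dot // ?dot_MperpK ?mulf_neq0 //.
by rewrite dot_scale dot_perpK mulf_neq0 // expf_neq0 // invr_eq0 mulf_neq0.
Qed.

Lemma pair_point_scale l x :
  l != 0 -> dot x x != 0 -> k != 0 -> pair_point (vscale l x) = pair_point x.
Proof.
move=> l0 xx k0; rewrite /pair_point Mperp_scale dot_scale; apply: tprodP => i j m.
by rewrite /vscale; field; rewrite l0 xx k0.
Qed.

Lemma pair_point_Mperp x : dot x x != 0 -> k != 0 -> s != 0 ->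
  pair_point (Mperp T x) = tprod (Mperp T x) x (vscale (dot x x * k)^-1 (ptrace_perp T)).
Proof.
move=> xx k0 s0; rewrite /pair_point (MperpK tS) dot_MperpK; apply: tprodP => i j m.
by rewrite /vscale; field; rewrite s0 xx k0.
Qed.

End PartiallySymmetric.

Section GenericPartiallySymmetric.
Variable R : realType.
Local Notation C := R[i].
Local Notation vec := (vec R).
Local Notation tensor := (tensor R).
Implicit Types (z : tensor) (x y w : vec).

Variable t : tensor.
Hypothesis tS : S21 t.
Local Notation T := (tarr t).
Local Notation k := (ptrace_sq T).

Hypothesis P4 : (pP T)`_4 != 0.
Hypothesis V2 : (pV T)`_2 != 0.
Hypothesis Q2 : (pQ T)`_2 != 0.
Hypothesis E2 : (pE T)`_2 != 0.
Hypothesis k0 : k != 0.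
Hypothesis s0 : msq T != 0.
Hypothesis resPP : resultant (pP T) (pP T)^`() != 0.
Hypothesis resPI : resultant (pP T) pI != 0.
Hypothesis resPV : resultant (pP T) (pV T) != 0.
Hypothesis resQI : resultant (pQ T) pI != 0.
Hypothesis resQE : resultant (pQ T) (pE T) != 0.

Lemma size_pP_eq : size (pP T) = 5. Proof. by have [_ ->] := lead_coef_top (size_pP T) P4. Qed.
Lemma size_pV_eq : size (pV T) = 3. Proof. by have [_ ->] := lead_coef_top (size_pV T) V2. Qed.
Lemma size_pQ_eq : size (pQ T) = 3. Proof. by have [_ ->] := lead_coef_top (size_pQ T) Q2. Qed.
Lemma size_pE_eq : size (pE T) = 3. Proof. by have [_ ->] := lead_coef_top (size_pE T) E2. Qed.

Lemma root_pP_dot r : root (pP T) r -> dot (vec2 1 r) (vec2 1 r) != 0.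
Proof. by rewrite dot_vec2_1; apply: resultant_root; rewrite ?size_pP_eq ?size_pI. Qed.

Lemma root_pP_Vform r : root (pP T) r -> Vform T (vec2 1 r) != 0.
Proof. by rewrite -horner_pV; apply: resultant_root; rewrite ?size_pP_eq ?size_pV_eq. Qed.

Lemma root_pQ_dot r : root (pQ T) r -> dot (vec2 1 r) (vec2 1 r) != 0.
Proof. by rewrite dot_vec2_1; apply: resultant_root; rewrite ?size_pQ_eq ?size_pI. Qed.

Lemma root_pQ_Eform r : root (pQ T) r -> Eform T (vec2 1 r) != 0.
Proof. by rewrite -horner_pE; apply: resultant_root; rewrite ?size_pQ_eq ?size_pE_eq. Qed.

Lemma pP_roots : exists2 rs, uniq rs /\ size rs = 4 & forall r, root (pP T) r = (r \in rs).
Proof.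
have p0 : pP T != 0 by rewrite -size_poly_eq0 size_pP_eq.
have sep : separable_poly (pP T) by rewrite -(resultant_deriv_separable p0).
by have := separable_roots p0 sep; rewrite size_pP_eq.
Qed.

Lemma critical_X21_roots z :
  critical (@X21 R) (@T21 R) t z <-> exists2 r, root (pP T) r & z = point21 t (vec2 1 r).
Proof.
rewrite critical_X21P //; split=> [[crit [x [w ez]]] | [r Pr ->]]; last first.
  have Pr' : Pform T (vec2 1 r) = 0 by rewrite -horner_pP; apply/rootP.
  split; first by apply: (point21_critical tS Pr' (root_pP_dot Pr) (root_pP_Vform Pr)).
  by eexists; eexists.
move: crit; rewrite ez critical_X3P => -[nz eqs].
have [Px0 _] := crit_eqs_diag eqs.
move: (nz); rewrite tprod_neq0 => /and3P[x0 _ _].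
have P01 : Pform T (vec2 0 1) != 0 by rewrite -coef_pP4.
have [xi0 Pr] := homog_root_affine (Pform_scale T) P01 x0 Px0.
have Pr' : root (pP T) (x i1 / x i0) by apply/rootP; rewrite horner_pP.
exists (x i1 / x i0) => //.
have ex := vec2_affine xi0.
have xx : dot x x != 0 by rewrite ex dot_scale mulf_neq0 ?expf_neq0 ?root_pP_dot.
by rewrite (crit_eqs_diag_point21 eqs xx) {1}ex point21_scale // root_pP_dot.
Qed.

Lemma point21_inj r r' : root (pP T) r -> root (pP T) r' ->
  point21 t (vec2 1 r) = point21 t (vec2 1 r') -> r = r'.
Proof.
move=> Pr Pr' e.
have w0 r0 : root (pP T) r0 -> (dot (vec2 1 r0) (vec2 1 r0) ^+ 2)^-1 * Vform T (vec2 1 r0) != 0.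
  by move=> h; rewrite mulf_neq0 ?invr_eq0 ?expf_neq0 ?root_pP_dot ?root_pP_Vform.
move: (congr1 (fun z => z (i0, i0, i0)) e) (congr1 (fun z => z (i0, i1, i0)) e).
rewrite /= !tprodE /vscale /vec2 /= !mul1r => e0 e1.
by apply: (mulIf (w0 r Pr)); rewrite [LHS]e1 e0.
Qed.

Lemma critical_X21_list : exists s : seq tensor,
  [/\ uniq s, size s = 4 & forall z, critical (@X21 R) (@T21 R) t z <-> z \in s].
Proof.
have [rs [urs srs] ers] := pP_roots.
exists [seq point21 t (vec2 1 r) | r <- rs]; split.
- rewrite map_inj_in_uniq // => r r' rrs rrs'.
  by apply: point21_inj; rewrite ers.
- by rewrite size_map.
move=> z; rewrite critical_X21_roots; split=> [[r Pr ->] | /mapP[r rrs ->]].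
  by apply: map_f; rewrite -ers.
by exists r; rewrite ?ers.
Qed.

Section PairPoints.
Variable r1 : C.
Hypothesis Qr1 : root (pQ T) r1.
Local Notation x1 := (vec2 1 r1).
Local Notation y1 := (Mperp T x1).
Local Notation w1 := (vscale (dot x1 x1 * k)^-1 (ptrace_perp T)).

Lemma dot_x1 : dot x1 x1 != 0. Proof. exact: root_pQ_dot. Qed.

Lemma det2_x1y1 : det2 x1 y1 != 0. Proof. exact: root_pQ_Eform. Qed.

Lemma w1_neq0 : vec_neq0 w1.
Proof.
apply: vec_neq0_dot; rewrite dot_scale dot_perpK.
by rewrite mulf_neq0 // expf_neq0 // invr_eq0 mulf_neq0 // dot_x1.
Qed.

Lemma Qform_x1 : Qform T x1 = 0. Proof. by rewrite -horner_pQ; apply/rootP. Qed.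

Lemma pair1_critical : critical (@X3 R) (@T3 R) t (tprod x1 y1 w1).
Proof. by apply: (pair_point_critical tS Qform_x1 dot_x1 k0 s0). Qed.

Lemma pair2_critical : critical (@X3 R) (@T3 R) t (tprod y1 x1 w1).
Proof. by apply: (critical_perm12 tS pair1_critical). Qed.

Lemma Qform_root_pair_point x : Qform T x = 0 -> vec_neq0 x ->
  pair_point t x = tprod x1 y1 w1 \/ pair_point t x = tprod y1 x1 w1.
Proof.
move=> Qx0 x0.
have Q01 : Qform T (vec2 0 1) != 0 by rewrite -coef_pQ2.
have [xi0 Qr] := homog_root_affine (Qform_scale T) Q01 x0 Qx0.
have yy : dot y1 y1 != 0 by rewrite (dot_MperpK tS) mulf_neq0 // dot_x1.
have Qy1 : Qform T y1 = 0 by rewrite (Qform_Mperp tS) Qform_x1 mulr0.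
have [yi0 Qr2] := homog_root_affine (Qform_scale T) Q01 (vec_neq0_dot yy) Qy1.
set r := x i1 / x i0 in Qr; set r2 := y1 i1 / y1 i0 in Qr2.
have rootQ u : Qform T (vec2 1 u) = 0 -> root (pQ T) u by move=> h; apply/rootP; rewrite horner_pQ.
have r12 : r1 != r2.
  apply: contraNneq det2_x1y1 => e; rewrite [y1](vec2_affine yi0) det2_scaler -/r2 -e.
  by rewrite /det2 /vec2 /= mul1r mulr1 subrr mulr0.
have ex : x = vscale (x i0) (vec2 1 r) := vec2_affine xi0.
have ey : y1 = vscale (y1 i0) (vec2 1 r2) := vec2_affine yi0.
have pQ0 : pQ T != 0 by rewrite -size_poly_eq0 size_pQ_eq.
rewrite ex pair_point_scale ?root_pQ_dot ?rootQ //.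
case: (root_quadratic (size_pQ T) pQ0 r12 Qr1 (rootQ _ Qr2) (rootQ _ Qr)) => ->; first by left.
right; rewrite -(pair_point_scale (x := vec2 1 r2) yi0) ?root_pQ_dot ?rootQ // -ey.
by rewrite pair_point_Mperp ?dot_x1.
Qed.

Lemma critical_X3_cases z : critical (@X3 R) (@T3 R) t z <->
  critical (@X21 R) (@T21 R) t z \/ z = tprod x1 y1 w1 \/ z = tprod y1 x1 w1.
Proof.
split=> [crit | [/(critical_X21P _ tS)[] // | [] ->]]; last 2 first.
- exact: pair1_critical.
- exact: pair2_critical.
have [_ [[x [y [w ez]]] _]] := crit; subst z.
have /critical_X3P[nz eqs] := crit.
have [xy0 | xy] := eqVneq (det2 x y) 0.
  move: (nz); rewrite tprod_neq0 => /and3P[x0 _ _].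
  have [l ey] := det2_eq0_scale x0 xy0.
  have ez : tprod x y w = tprod x x (vscale l w).
    by rewrite ey; apply: tprodP => i j m; rewrite /vscale; ring.
  by left; apply/(critical_X21P _ tS); split=> //; exists x, (vscale l w).
have [Qx0 ->] := crit_eqs_pair tS nz eqs xy k0 s0.
by right; apply: Qform_root_pair_point => //; move: nz; rewrite tprod_neq0 => /and3P[].
Qed.

Lemma pair_neq : tprod x1 y1 w1 != tprod y1 x1 w1.
Proof. exact: tprod_swap_neq det2_x1y1 w1_neq0. Qed.

Lemma pair1_notX21 : ~ X21 (tprod x1 y1 w1).
Proof. exact: tprod_notX21 det2_x1y1 w1_neq0. Qed.

Lemma pair2_notX21 : ~ X21 (tprod y1 x1 w1).
Proof. by apply: tprod_notX21 w1_neq0; rewrite det2C oppr_eq0 det2_x1y1. Qed.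

Lemma pair_singular_value : real_tensor t -> exists sigma : C, sigma \is Num.real /\
  singular_value t (tprod x1 y1 w1) sigma /\ singular_value t (tprod y1 x1 w1) sigma.
Proof.
move=> treal; have tr i j m : T i j m \is Num.real := treal (i, j, m).
have rL m : ptrace T m \is Num.real by rewrite rpredD.
have rw m : ptrace_perp T m \is Num.real.
  by case: (ord2P m) => ->; rewrite /ptrace_perp /perp /vec2 /= ?rpredN.
have rM j : Mperp T (vec2 1 0) j \is Num.real.
  by rewrite /Mperp /contr2 !big_ord2 /vec2 /= !rpredD ?rpredM ?rpred0 ?rpred1.
have s_ge0 : 0 <= msq T by rewrite addr_ge0 ?real_exprn_even_ge0.
have k_ge0 : 0 <= k by rewrite /ptrace_sq dotE addr_ge0 // -expr2 real_exprn_even_ge0.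
set ss := sqrtC (msq T); set sk := sqrtC k; set rq := sqrtC (dot x1 x1).
have ss0 : ss != 0 by rewrite sqrtC_eq0.
have sk0 : sk != 0 by rewrite sqrtC_eq0.
have rq0 : rq != 0 by rewrite sqrtC_eq0 dot_x1.
have es : msq T = ss ^+ 2 by rewrite sqrtCK.
have ek : k = sk ^+ 2 by rewrite sqrtCK.
have eq : dot x1 x1 = rq ^+ 2 by rewrite sqrtCK.
exists (ss / sk); split.
  by rewrite rpredM ?realV ?sqrtC_real.
set xh := vscale rq^-1 x1; set yh := vscale (ss * rq)^-1 y1; set wh := vscale sk^-1 (ptrace_perp T).
have qx : dot xh xh = 1 by rewrite dot_scale eq; field.
have qy : dot yh yh = 1 by rewrite dot_scale (dot_MperpK tS) es eq; field; rewrite ss0 rq0.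
have qw : dot wh wh = 1 by rewrite dot_scale dot_perpK -/(ptrace_sq T) ek; field.
split; [apply: (singular_value_critical pair1_critical _ qx qy qw)
       | apply: (singular_value_critical pair2_critical _ qy qx qw)];
  apply: tensor3P => i j m; rewrite !ffunE /= /xh /yh /wh /vscale eq ek; field;
  by rewrite rq0 sk0 ss0.
Qed.

End PairPoints.

Lemma critical_points21 :
  exists s : seq tensor,
    [/\ uniq s, size s = 4 & forall z, critical (@X21 R) (@T21 R) t z <-> z \in s] /\
    exists x y z : vec,
      let z1 := tprod x y z in let z2 := tprod y x z in
      [/\ z1 != z2, ~ X21 z1, ~ X21 z2,
          (forall w : tensor, critical (@X3 R) (@T3 R) t w <-> w \in s \/ w = z1 \/ w = z2) &
          (real_tensor t -> exists sigma : C, sigma \is Num.real /\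
             singular_value t z1 sigma /\ singular_value t z2 sigma)].
Proof.
have [s [us ss es]] := critical_X21_list.
have [r1 Qr1] : exists r1, root (pQ T) r1 by apply/closed_rootP; rewrite size_pQ_eq.
exists s; split; first by [].
exists (vec2 1 r1), (Mperp T (vec2 1 r1)).
exists (vscale (dot (vec2 1 r1) (vec2 1 r1) * k)^-1 (ptrace_perp T)).
split; [exact: pair_neq | exact: pair1_notX21 | exact: pair2_notX21 | | exact: pair_singular_value].
by move=> w; rewrite (critical_X3_cases Qr1) es.
Qed.

Section FullySymmetric.
Hypothesis tS3 : S3 t.
Hypothesis L1 : ptrace T i1 != 0.
Hypothesis Cw : Cform T (ptrace_perp T) != 0.

Let tS23 := S3_tarr23 tS3.

Local Notation r4 := (- ptrace T i0 / ptrace T i1).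
Local Notation x4 := (vec2 1 r4).
Local Notation y4 := (vscale (dot x4 x4 ^+ 2)^-1 (contr3 T x4 x4)).

Lemma Cform_x4 : Cform T x4 != 0.
Proof.
have ew : ptrace_perp T = vscale (- ptrace T i1) x4.
  by apply: vec2_eq; rewrite /ptrace_perp /perp /vscale /vec2 /=; field.
by move: Cw; rewrite ew Cform_scale mulf_eq0 negb_or => /andP[].
Qed.

Lemma root_r4 : root (pP T) r4.
Proof.
apply/rootP; rewrite horner_pP (Pform_factor tS tS23) dotE /vec2 /=.
suff -> : ptrace T i0 * 1 + ptrace T i1 * r4 = 0 by rewrite mulr0.
by field.
Qed.

Lemma root_pP_Cform r : root (pP T) r -> Cform T (vec2 1 r) != 0 -> r = r4.
Proof.
move=> /rootP; rewrite horner_pP (Pform_factor tS tS23) => /eqP.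
rewrite mulf_eq0 => /orP[/eqP-> | /eqP]; first by rewrite eqxx.
rewrite dotE /vec2 /= mulr1 => e _; apply: (mulfI L1).
rewrite [RHS](_ : _ = - ptrace T i0); last by field.
by apply/eqP; rewrite -addr_eq0 addrC e.
Qed.

Lemma point21_Xsym3 r : root (pP T) r -> Xsym3 (point21 t (vec2 1 r)) <-> Cform T (vec2 1 r) = 0.
Proof.
move=> Pr; have xx := root_pP_dot Pr; set x := vec2 1 r.
have ka : (dot x x ^+ 2)^-1 != 0 by rewrite invr_eq0 expf_neq0.
rewrite Cform_det2; split=> [[a ea] | ].
  have : point21 t x (i0, i0, i1) - point21 t x (i1, i0, i0) = 0 by rewrite ea !tprodE; ring.
  rewrite /point21 !tprodE /vscale => e; apply: (mulfI ka).
  by rewrite mulr0 -e /det2 /x /vec2 /=; ring.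
move/(det2_eq0_scale (vec_neq0_dot xx)) => -[l ev].
exists (vscale (3.-root ((dot x x ^+ 2)^-1 * l)) x); rewrite /point21 ev.
apply: tprodP => i j m; rewrite /vscale.
transitivity (3.-root ((dot x x ^+ 2)^-1 * l) ^+ 3 * (x i * x j * x m)); last by ring.
by rewrite rootCK // -/x; ring.
Qed.

Lemma pP_roots_sym : exists2 rs, uniq rs /\ size rs = 3 &
  forall r, (root (pP T) r /\ Cform T (vec2 1 r) = 0) <-> r \in rs.
Proof.
have [rs [urs srs] ers] := pP_roots; pose p r := Cform T (vec2 1 r) == 0.
exists [seq r <- rs | p r]; last first.
  move=> r; rewrite mem_filter ers /p.
  by split=> [[-> ->] | /andP[/eqP -> ->]]; rewrite ?eqxx.
split; first exact: filter_uniq.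
have r4_rs : r4 \in rs by rewrite -ers root_r4.
have notp r : r \in rs -> (~~ p r) = (r == r4).
  move=> rrs; apply/idP/eqP => [pr | ->]; last exact: Cform_x4.
  by apply: root_pP_Cform; rewrite ?ers.
have := count_predC p rs; rewrite (eq_in_count notp) (count_uniq_mem _ urs) r4_rs srs.
by rewrite size_filter => /eqP; rewrite -[4]/(3 + 1)%N eqn_add2r => /eqP.
Qed.

Lemma critical_Xsym_roots z : critical (@Xsym3 R) (@Tsym3 R) t z <->
  exists2 r, root (pP T) r /\ Cform T (vec2 1 r) = 0 & z = point21 t (vec2 1 r).
Proof.
rewrite critical_XsymP //; split=> [[crit hz] | [r [Pr Cr] ->]].
  have /critical_X21_roots[r Pr ez] : critical (@X21 R) (@T21 R) t z.
    by apply/(critical_X21P _ tS); split=> //; exact: Xsym3_X21.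
  by exists r => //; split=> //; apply/(point21_Xsym3 Pr); rewrite -ez.
have /(critical_X21P _ tS)[crit _] : critical (@X21 R) (@T21 R) t (point21 t (vec2 1 r)).
  by apply/critical_X21_roots; exists r.
by split=> //; apply/(point21_Xsym3 Pr).
Qed.

Lemma critical_X21_sym z : critical (@X21 R) (@T21 R) t z <->
    (exists2 r, root (pP T) r /\ Cform T (vec2 1 r) = 0 & z = point21 t (vec2 1 r))
  \/ z = tprod x4 x4 y4.
Proof.
rewrite critical_X21_roots; split=> [[r Pr ->] | [[r [Pr _] ->] | ->]].
- have [Cr | Cr] := eqVneq (Cform T (vec2 1 r)) 0; first by left; exists r.
  by right; rewrite (root_pP_Cform Pr Cr).
- by exists r.
- by exists r4; first exact: root_r4.
Qed.

Lemma det2_x4y4 : det2 x4 y4 != 0.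
Proof.
rewrite det2_scaler -Cform_det2 mulf_neq0 ?Cform_x4 //.
by rewrite invr_eq0 expf_neq0 // root_pP_dot // root_r4.
Qed.

Lemma x4_neq0 : vec_neq0 x4.
Proof. by apply: vec_neq0_dot; rewrite root_pP_dot // root_r4. Qed.

Lemma z1_critical : critical (@X21 R) (@T21 R) t (tprod x4 x4 y4).
Proof. by apply/critical_X21_sym; right. Qed.

Lemma z2_critical : critical (@X3 R) (@T3 R) t (tprod x4 y4 x4).
Proof. by apply: critical_perm23 => //; have /(critical_X21P _ tS)[] := z1_critical. Qed.

Lemma z3_critical : critical (@X3 R) (@T3 R) t (tprod y4 x4 x4).
Proof. exact: critical_perm12 z2_critical. Qed.

Lemma z2_notX21 : ~ X21 (tprod x4 y4 x4).
Proof. exact: tprod_notX21 det2_x4y4 x4_neq0. Qed.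

Lemma z3_notX21 : ~ X21 (tprod y4 x4 x4).
Proof. by apply: tprod_notX21 x4_neq0; rewrite det2C oppr_eq0 det2_x4y4. Qed.

Lemma pairs_sym r1 : root (pQ T) r1 -> forall w : tensor,
  let x1 := vec2 1 r1 in let y1 := Mperp T x1 in
  let w1 := vscale (dot x1 x1 * k)^-1 (ptrace_perp T) in
  (w = tprod x1 y1 w1 \/ w = tprod y1 x1 w1) <-> (w = tprod x4 y4 x4 \/ w = tprod y4 x4 x4).
Proof.
move=> Qr1 w x1 y1 w1.
have pair z : critical (@X3 R) (@T3 R) t z -> ~ X21 z -> z = tprod x1 y1 w1 \/ z = tprod y1 x1 w1.
  move=> /(critical_X3_cases Qr1)[/(critical_X21P _ tS)[_ //] | //].
have [e2 | e2] := pair _ z2_critical z2_notX21; have [e3 | e3] := pair _ z3_critical z3_notX21;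
  rewrite e2 e3; try tauto.
all: by move: (tprod_swap_neq det2_x4y4 x4_neq0); rewrite e2 e3 eqxx.
Qed.

Lemma critical_points_sym :
  exists s : seq tensor,
    [/\ uniq s, size s = 3 & forall z, critical (@Xsym3 R) (@Tsym3 R) t z <-> z \in s] /\
    exists x y : vec,
      let z1 := tprod x x y in let z2 := tprod x y x in let z3 := tprod y x x in
      [/\ uniq [:: z1; z2; z3], ~ Xsym3 z1 /\ ~ Xsym3 z2 /\ ~ Xsym3 z3,
          (forall w : tensor, critical (@X3 R) (@T3 R) t w <->
             w \in s \/ w = z1 \/ w = z2 \/ w = z3) &
          (real_tensor t -> exists sigma : C, sigma \is Num.real /\
             [/\ singular_value t z1 sigma, singular_value t z2 sigma &
                 singular_value t z3 sigma])].
Proof.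
have [rs [urs srs] ers] := pP_roots_sym.
have memS z : (exists2 r, root (pP T) r /\ Cform T (vec2 1 r) = 0 & z = point21 t (vec2 1 r)) <->
    z \in [seq point21 t (vec2 1 r) | r <- rs].
  by split=> [[r /ers rrs ->] | /mapP[r /ers rrs ->]]; [apply: map_f | exists r].
exists [seq point21 t (vec2 1 r) | r <- rs]; split.
  split; [|by rewrite size_map | by move=> z; rewrite critical_Xsym_roots memS].
  rewrite map_inj_in_uniq // => r r' /ers[Pr _] /ers[Pr' _]; exact: point21_inj.
have [r1 Qr1] : exists r1, root (pQ T) r1 by apply/closed_rootP; rewrite size_pQ_eq.
have z1X21 : X21 (tprod x4 x4 y4) by exists x4, y4.
exists x4, y4; split.
- rewrite /= !inE !negb_or (tprod_swap_neq det2_x4y4 x4_neq0) !andbT.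
  by apply/andP; split; apply/eqP => e; [apply: z2_notX21 | apply: z3_notX21]; rewrite -e.
- split; first by rewrite (point21_Xsym3 root_r4); apply/eqP; exact: Cform_x4.
  by split=> /Xsym3_X21; [exact: z2_notX21 | exact: z3_notX21].
- move=> w; rewrite (critical_X3_cases Qr1) (pairs_sym Qr1) critical_X21_sym memS.
  by split=> [[[|] | ] | [|[|]]]; tauto.
move=> /(pair_singular_value Qr1)[sigma [real [sv1 sv2]]].
have sv (w : tensor) : w = tprod x4 y4 x4 \/ w = tprod y4 x4 x4 -> singular_value t w sigma.
  by move/(pairs_sym Qr1 w) => [->|->].
exists sigma; split=> //; split; last 2 first.
- by apply: sv; left.
- by apply: sv; right.
by apply: (singular_value_perm23 (b := y4) tS3); apply: sv; left.
Qed.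

End FullySymmetric.

End GenericPartiallySymmetric.

Section Witness.
Variable R : realType.
Local Notation C := R[i].

Definition t0 : tensor R :=
  [ffun p : 'I_2 * 'I_2 * 'I_2 => if odd (p.1.1 + p.1.2 + p.2) then 2 else -1].
Local Notation T0 := (tarr t0).

Lemma t0_S3 : S3 t0.
Proof.
by move=> i j k; rewrite !ffunE /=; case: (ord2P i) => ->; case: (ord2P j) => ->;
  case: (ord2P k) => ->.
Qed.

Ltac eval_t0 := rewrite /Pform /Qform /Eform /Vform /Cform /msq /ptrace_sq /Mperp /ptrace_perp
  /contr /contr2 /contr3 /ptrace /dot /perp /det2 /vec2 /tarr /t0 ?big_ord2 !ffunE /=.

Lemma horner_pP_t0 r : (pP T0).[r] = 2 * ((r + 1) * (r - 1) * (r - 2) * (2 * r - 1)).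
Proof. rewrite horner_pP; eval_t0; ring. Qed.

Lemma horner_pQ_t0 r : (pQ T0).[r] = 24 * ((2 * r - 1) * (r - 2)).
Proof. rewrite horner_pQ; eval_t0; ring. Qed.

Lemma horner_pV_t0 r : (pV T0).[r] = -1 + 4 * r - r ^+ 2.
Proof. rewrite horner_pV; eval_t0; ring. Qed.

Lemma horner_pE_t0 r : (pE T0).[r] = 6 * r ^+ 2 - 6.
Proof. rewrite horner_pE; eval_t0; ring. Qed.

Lemma t0_values :
  [/\ (pP T0)`_4 = 4, (pV T0)`_2 = -1, (pQ T0)`_2 = 48 & (pE T0)`_2 = 6] /\
  [/\ ptrace_sq T0 = 20, msq T0 = 36, ptrace T0 i1 = 4 & Cform T0 (ptrace_perp T0) = -72].
Proof.
rewrite coef_pP4 coef_pV2 coef_pQ2 coef_pE2.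
by split; split; eval_t0; ring.
Qed.

Ltac num_neq0 := repeat (first [apply: mulf_neq0 | rewrite oppr_eq0 | rewrite invr_eq0]);
  rewrite ?pnatr_eq0 ?oner_eq0.
Ltac num_eq := field; rewrite ?pnatr_eq0.
Ltac nonzero_as v := match goal with |- is_true (?a != 0) =>
  rewrite (_ : a = v); [num_neq0 | num_eq] end.
Ltac distinct_as v := match goal with |- is_true (?a != ?b) =>
  rewrite -subr_eq0 (_ : a - b = v); [num_neq0 | num_eq] end.

Lemma half_of (r : C) : 2 * r - 1 = 0 -> r = 2^-1.
Proof.
move/eqP; rewrite subr_eq0 => /eqP e; apply: (@mulfI _ 2); first by rewrite pnatr_eq0.
by rewrite e mulfV // pnatr_eq0.
Qed.

Lemma root_pP_t0 r : root (pP T0) r -> [\/ r = -1, r = 1, r = 2 | r = 2^-1].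
Proof.
rewrite /root horner_pP_t0 mulf_eq0 pnatr_eq0 /= !mulf_eq0 -!orbA.
case/or4P=> /eqP h; [apply: Or41 | apply: Or42 | apply: Or43 | apply: Or44; exact: half_of h].
- by apply/eqP; rewrite -addr_eq0 h.
- by apply/eqP; rewrite -subr_eq0 h.
- by apply/eqP; rewrite -subr_eq0 h.
Qed.

Lemma root_pQ_t0 r : root (pQ T0) r -> r = 2^-1 \/ r = 2.
Proof.
rewrite /root horner_pQ_t0 mulf_eq0 pnatr_eq0 /= mulf_eq0.
by case/orP=> /eqP h; [left; exact: half_of h | right; apply/eqP; rewrite -subr_eq0 h].
Qed.

Lemma disc_sym_t0 : disc_sym T0 != 0.
Proof.
have [[P4 V2 Q2 E2] [k s L1 Cw]] := t0_values.
have P4' : (pP T0)`_4 != 0 by rewrite P4 pnatr_eq0.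
have [_ sP] := lead_coef_top (size_pP T0) P4'.
have P0 : pP T0 != 0 by rewrite -size_poly_eq0 sP.
rewrite /disc_sym /disc21 /lead21 P4 V2 Q2 E2 k s L1 Cw; num_neq0 => //.
- rewrite resultant_deriv_separable //; apply: (roots_separable (rs := [:: -1; 1; 2; 2^-1])).
  + rewrite /= !inE !negb_or !andbT; apply/and3P; split; [apply/and3P; split | apply/andP; split |].
    * by distinct_as (-2 : C).
    * by distinct_as (-3 : C).
    * by distinct_as (-3 / 2 : C).
    * by distinct_as (-1 : C).
    * by distinct_as (2^-1 : C).
    * by distinct_as (3 / 2 : C).
  + by rewrite sP.
  + by rewrite /= andbT /root !horner_pP_t0; apply/and4P; split; apply/eqP; num_eq.
- apply: resultant_neq0 => r /root_pP_t0[] ->; rewrite /root /pI !hornerE.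
  + by nonzero_as (2 : C).
  + by nonzero_as (2 : C).
  + by nonzero_as (5 : C).
  + by nonzero_as (5 / 4 : C).
- apply: resultant_neq0 => r /root_pP_t0[] ->; rewrite /root horner_pV_t0.
  + by nonzero_as (-6 : C).
  + by nonzero_as (2 : C).
  + by nonzero_as (3 : C).
  + by nonzero_as (3 / 4 : C).
- apply: resultant_neq0 => r /root_pQ_t0[] ->; rewrite /root /pI !hornerE.
  + by nonzero_as (5 / 4 : C).
  + by nonzero_as (5 : C).
- apply: resultant_neq0 => r /root_pQ_t0[] ->; rewrite /root horner_pE_t0.
  + by nonzero_as (- (9 / 2) : C).
  + by nonzero_as (18 : C).
Qed.

End Witness.

Section Genericity.
Variable R : realType.
Local Notation C := R[i].

Definition coord_index (i j k : 'I_2) : 'I_8 := inord (4 * i + 2 * j + k).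
Definition Tvar : 'I_2 -> 'I_2 -> 'I_2 -> {mpoly C[8]} := fun i j k => 'X_(coord_index i j k).

Lemma coords_index (t : tensor R) i j k : coords t (coord_index i j k) = t (i, j, k).
Proof.
by rewrite /coords /coord_index; case: (ord2P i) => ->; case: (ord2P j) => ->;
  case: (ord2P k) => ->; congr (t (_, _, _)); apply: val_inj; rewrite /= ?inordK.
Qed.

Lemma meval_Tvar (t : tensor R) : (fun i j k => meval (coords t) (Tvar i j k)) = tarr t.
Proof.
do 3 apply: functional_extensionality => ?.
by rewrite /Tvar mevalXU coords_index.
Qed.

Lemma meval_disc21 (t : tensor R) : meval (coords t) (disc21 Tvar) = disc21 (tarr t).
Proof. by rewrite disc21_rmorph meval_Tvar. Qed.

Lemma meval_disc_sym (t : tensor R) : meval (coords t) (disc_sym Tvar) = disc_sym (tarr t).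
Proof. by rewrite disc_sym_rmorph meval_Tvar. Qed.

End Genericity.

Theorem proposition6p1 (R : realType) :
  (* (1) mu = (2,1) *)
  general_in (@S21 R) (fun t =>
    exists s : seq (tensor R),
      [/\ uniq s, size s = 4%N &
          forall z, critical (@X21 R) (@T21 R) t z <-> z \in s] /\
      exists x y z : vec R,
        let z1 := tprod x y z in let z2 := tprod y x z in
        [/\ z1 != z2, ~ X21 z1, ~ X21 z2,
            (forall w, critical (@X3 R) (@T3 R) t w <->
                         w \in s \/ w = z1 \/ w = z2) &
            (real_tensor t ->
               exists sigma : R[i], sigma \is Num.real /\
                 singular_value t z1 sigma /\ singular_value t z2 sigma)])
  /\
  (* (2) mu = (3) *)
  general_in (@S3 R) (fun t =>
    exists s : seq (tensor R),
      [/\ uniq s, size s = 3%N &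
          forall z, critical (@Xsym3 R) (@Tsym3 R) t z <-> z \in s] /\
      exists x y : vec R,
        let z1 := tprod x x y in let z2 := tprod x y x in let z3 := tprod y x x in
        [/\ uniq [:: z1; z2; z3], ~ Xsym3 z1 /\ ~ Xsym3 z2 /\ ~ Xsym3 z3,
            (forall w, critical (@X3 R) (@T3 R) t w <->
                         w \in s \/ w = z1 \/ w = z2 \/ w = z3) &
            (real_tensor t ->
               exists sigma : R[i], sigma \is Num.real /\
                 [/\ singular_value t z1 sigma, singular_value t z2 sigma &
                     singular_value t z3 sigma])]).
Proof.
have [t0_reg _ _] := disc_sym_factors (disc_sym_t0 R).
split.
- exists (disc21 (Tvar R)); split.
    by exists (t0 R); rewrite meval_disc21; split=> //; apply: S3_S21; exact: t0_S3.
  move=> t tS; rewrite meval_disc21 => /disc21_factors[[P4 V2 Q2 E2] [k0 s0 rPP] [rPI rPV rQI rQE]].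
  exact: (critical_points21 tS P4 V2 Q2 E2 k0 s0 rPP rPI rPV rQI rQE).
exists (disc_sym (Tvar R)); split.
  by exists (t0 R); rewrite meval_disc_sym; split; [exact: t0_S3 | exact: disc_sym_t0].
move=> t tS3; rewrite meval_disc_sym => /disc_sym_factors[].
move=> /disc21_factors[[P4 V2 Q2 E2] [k0 s0 rPP] [rPI rPV rQI rQE]] L1 Cw.
exact: (critical_points_sym (S3_S21 tS3) P4 V2 Q2 E2 k0 s0 rPP rPI rPV rQI rQE tS3 L1 Cw).
Qed.
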